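(* Let $A$ be any randomized algorithm which, on input a continuous proper scoring rule $s$ with convex exposure on an $n$-outcome forecast domain $\mathcal{D}$ and expert forecasts $\mathbf{p}_1,\dots,\mathbf{p}_m\in\mathcal{D}$, outputs a weight vector $\mathbf{w}\in\Delta^m$. Fix any such input and let $\hat{\mathbf{w}}=\mathbb{E}_A[\mathbf{w}]$. Then for every $j\in[n]$, \[s(\mathbf{p}^*_{\hat{\mathbf{w}}};j)\ge\mathbb{E}_A\big[s(\mathbf{p}^*_{\mathbf{w}};j)\big],\] where for $\mathbf{x}\in\Delta^m$, $\mathbf{p}^*_{\mathbf{x}}$ denotes the quasi-arithmetic pool of $\mathbf{p}_1,\dots,\mathbf{p}_m$ with weight vector $\mathbf{x}$ with respect to the exposure function of $s$.
   Context: $\Delta^k$ is the standard simplex in $\mathbb{R}^k$. An $n$-outcome forecast domain is a convex $(n-1)$-dimensional subset of $\Delta^n$. A proper scoring rule on $\mathcal{D}$ is $s:\mathcal{D}\times[n]\to\mathbb{R}$ with $\sum_j p(j)s(\mathbf{p};j)\ge\sum_j p(j)s(\mathbf{x};j)$ for all $\mathbf{p},\mathbf{x}\in\mathcal{D}$, equality only if $\mathbf{x}=\mathbf{p}$. $G(\mathbf{p}):=\sum_j p(j)s(\mathbf{p};j)$ is differentiable and strictly convex; the exposure function is $\mathbf{g}=\nabla G$ (values modulo translation by the all-ones vector). Convex exposure: range of $\mathbf{g}$ is convex. The QA pool with weights $\mathbf{x}$ is the unique $\mathbf{p}^*_{\mathbf{x}}\in\mathcal{D}$ with $\mathbf{g}(\mathbf{p}^*_{\mathbf{x}})=\sum_i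 x_i\mathbf{g}(\mathbf{p}_i)$ (modulo the all-ones vector). *)

From HB Require Import structures.
From mathcomp Require Import all_boot all_order all_algebra.
From mathcomp Require Import all_classical all_reals all_analysis.
Set Implicit Arguments. Unset Strict Implicit. Unset Printing Implicit Defensive.
Import Order.TTheory GRing.Theory Num.Theory.
Local Open Scope classical_set_scope.
Local Open Scope ring_scope.

Section ScoringDefs.
Variable R : realType.

Definition dotv k (a b : 'rV[R]_k) : R := \sum_(j < k) a 0 j * b 0 j.
Definition nrm1 k (v : 'rV[R]_k) : R := \sum_(j < k) `|v 0 j|.
Definition ones k : 'rV[R]_k := const_mx 1.
Arguments ones k : clear implicits.

Definition std_simplex k : set 'rV[R]_k :=
  [set p | (forall j, 0 <= p 0 j) /\ \sum_(j < k) p 0 j = 1].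
Arguments std_simplex k : clear implicits.

Definition convex_set_v k (D : set 'rV[R]_k) : Prop :=
  forall x y, D x -> D y -> forall t : R, 0 <= t <= 1 ->
    D (t *: x + (1 - t) *: y).

(* n-outcome forecast domain: convex, (n-1)-dimensional subset of Delta^n.
   (n-1)-dimensionality: D contains a point p0 and n-1 points q i such that
   the differences q i - p0 are linearly independent. *)
Definition forecast_domain n (D : set 'rV[R]_n) : Prop :=
  [/\ D `<=` std_simplex n, convex_set_v D &
      exists (p0 : 'rV[R]_n) (q : 'I_n.-1 -> 'rV[R]_n),
        [/\ D p0, (forall i, D (q i)) &
            row_free (\matrix_(i < n.-1) (q i - p0))]].

Definition exp_score n (s : 'rV[R]_n -> 'I_n -> R) (p x : 'rV[R]_n) : R :=
  \sum_(j < n) p 0 j * s x j.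

Definition proper_scoring_rule n (D : set 'rV[R]_n)
    (s : 'rV[R]_n -> 'I_n -> R) : Prop :=
  forall p x, D p -> D x ->
    exp_score s p x <= exp_score s p p /\
    (exp_score s p x = exp_score s p p -> x = p).

Definition Gfun n (s : 'rV[R]_n -> 'I_n -> R) (p : 'rV[R]_n) : R :=
  exp_score s p p.

Definition continuous_scoring_rule n (D : set 'rV[R]_n)
    (s : 'rV[R]_n -> 'I_n -> R) : Prop :=
  forall j p, D p -> forall eps : R, 0 < eps -> exists2 delta : R, 0 < delta &
    forall q, D q -> nrm1 (q - p) < delta -> `|s q j - s p j| < eps.

Definition strictly_convex_on n (D : set 'rV[R]_n) (G : 'rV[R]_n -> R) : Prop :=
  forall x y, D x -> D y -> x <> y -> forall t : R, 0 < t < 1 ->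
    G (t *: x + (1 - t) *: y) < t * G x + (1 - t) * G y.

(* g is a gradient of G on D (differentiability relative to D; since D
   spans the hyperplane sum = 1, g(p) is determined modulo the all-ones
   vector). *)
Definition is_gradient_on n (D : set 'rV[R]_n) (G : 'rV[R]_n -> R)
    (g : 'rV[R]_n -> 'rV[R]_n) : Prop :=
  forall p, D p -> forall eps : R, 0 < eps -> exists2 delta : R, 0 < delta &
    forall q, D q -> nrm1 (q - p) < delta ->
      `|G q - G p - dotv (g p) (q - p)| <= eps * nrm1 (q - p).

(* convex exposure: the range of g (modulo translation by the all-ones
   vector) is convex *)
Definition convex_exposure n (D : set 'rV[R]_n) (g : 'rV[R]_n -> 'rV[R]_n) : Prop :=
  forall p q, D p -> D q -> forall t : R, 0 <= t <= 1 ->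
    exists r, D r /\ exists c : R,
      g r = t *: g p + (1 - t) *: g q + c *: ones n.

Definition is_qa_pool n m (D : set 'rV[R]_n) (g : 'rV[R]_n -> 'rV[R]_n)
    (ps : 'I_m -> 'rV[R]_n) (x : 'rV[R]_m) (p : 'rV[R]_n) : Prop :=
  D p /\ exists c : R, g p = \sum_(i < m) x 0 i *: g (ps i) + c *: ones n.

Definition qa_pool n m (D : set 'rV[R]_n) (g : 'rV[R]_n -> 'rV[R]_n)
    (ps : 'I_m -> 'rV[R]_n) (x : 'rV[R]_m) : 'rV[R]_n :=
  xget 0 [set p | is_qa_pool D g ps x p].

End ScoringDefs.
Arguments std_simplex {R} k.
Arguments ones {R} k.

(* Properness says that the score vector s(p; .) is a subgradient of the
   expected score G at p, relative to D.  Comparing the subgradient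
   inequalities at p and at nearby points of a segment of D, differentiability
   of G and continuity of s force s(p; .) to agree with g(p) along every
   direction of D; since D spans the hyperplane sum = 1, s(p; .) = g(p) + c 1.
   Hence, for a fixed belief q, the score s(p*_x; j) minus the expected score
   of p*_x under q is an affine function of the weights x.  Taking q = p*_ŵ,
   properness bounds that expected score by G(q), so s(p*_w; j) is at most an
   affine function of w which equals s(p*_ŵ; j) at ŵ = E[w]; integrate. *)

From HB Require Import structures.
From mathcomp Require Import all_boot all_order all_algebra.
From mathcomp Require Import all_classical all_reals all_analysis.
From mathcomp Require Import measurable_realfun zify ring lra.
Set Implicit Arguments. Unset Strict Implicit. Unset Printing Implicit Defensive.
Import Order.TTheory GRing.Theory Num.Theory.
Local Open Scope classical_set_scope.
Local Open Scope ring_scope.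

Section RowVectors.
Variables (R : realType) (n : nat).
Implicit Types (a b v u : 'rV[R]_n).

Lemma dotvC a b : dotv a b = dotv b a.
Proof. by apply: eq_bigr => k _; rewrite mulrC. Qed.

Lemma dotvBl a b u : dotv (a - b) u = dotv a u - dotv b u.
Proof. by rewrite /dotv -sumrB; apply: eq_bigr => k _; rewrite !mxE mulrBl. Qed.

Lemma dotvBr v a b : dotv v (a - b) = dotv v a - dotv v b.
Proof. by rewrite !(dotvC v) dotvBl. Qed.

Lemma dotvZr v t a : dotv v (t *: a) = t * dotv v a.
Proof. by rewrite /dotv mulr_sumr; apply: eq_bigr => k _; rewrite !mxE mulrCA. Qed.

Lemma dotv_combination m (x : 'I_m -> R) (v : 'I_m -> 'rV[R]_n) c u :
  \sum_k u 0 k = 1 ->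
  dotv (\sum_i x i *: v i + c *: ones n) u = \sum_i x i * dotv (v i) u + c.
Proof.
move=> u1; rewrite /dotv.
under eq_bigr do rewrite !mxE summxE mulrDl.
rewrite big_split /=; congr (_ + _); last by rewrite -mulr_sumr u1 !mulr1.
under eq_bigr do rewrite mulr_suml.
rewrite exchange_big /=; apply: eq_bigr => i _; rewrite mulr_sumr.
by apply: eq_bigr => k _; rewrite !mxE mulrA.
Qed.

Lemma nrm1_ge0 a : 0 <= nrm1 a.
Proof. exact: sumr_ge0. Qed.

Lemma nrm1Z t a : 0 <= t -> nrm1 (t *: a) = t * nrm1 a.
Proof.
move=> t0; rewrite /nrm1 mulr_sumr; apply: eq_bigr => k _.
by rewrite !mxE normrM ger0_norm.
Qed.

Lemma dotv_lipschitz a b u (e : R) :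
  (forall k, `|a 0 k - b 0 k| <= e) -> `|dotv a u - dotv b u| <= e * nrm1 u.
Proof.
move=> ab; rewrite -dotvBl /nrm1 mulr_sumr.
apply: (le_trans (ler_norm_sum _ _ _)); apply: ler_sum => k _.
by rewrite normrM !mxE ler_wpM2r.
Qed.

Lemma segmentBl (p r : 'rV[R]_n) t : t *: r + (1 - t) *: p - p = t *: (r - p).
Proof. by apply/rowP => k; rewrite !mxE; ring. Qed.

End RowVectors.

Lemma forecast_domain_normal_ones (R : realType) n (D : set 'rV[R]_n) (p v : 'rV[R]_n) :
  forecast_domain D -> D p ->
  (forall r, D r -> dotv v (r - p) = 0) -> exists c : R, v = c *: ones n.
Proof.
case: n D p v => [|n] D p v [DS _ [p0 [q [Dp0 Dq free]]]] Dp vD.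
  by exists 0; apply/rowP => -[].
set M := \matrix_(i < n) (q i - p0).
have vM : (v <= kermx M^T)%MS.
  apply/sub_kermxP/rowP => i.
  have -> : (v *m M^T) 0 i = dotv v (q i - p0).
    by rewrite !mxE; apply: eq_bigr => k _; rewrite !mxE.
  have -> : q i - p0 = (q i - p) - (p0 - p) by rewrite opprB addrA subrK.
  by rewrite dotvBr (vD _ (Dq i)) (vD _ Dp0) subrr mxE.
have onesM : (ones n.+1 <= kermx M^T)%MS.
  apply/sub_kermxP/rowP => i; rewrite !mxE.
  have [_ qi1] := DS _ (Dq i); have [_ p01] := DS _ Dp0.
  transitivity (\sum_k q i 0 k - \sum_k p0 0 k); last by rewrite qi1 p01 subrr.
  by rewrite -sumrB; apply: eq_bigr => k _; rewrite !mxE mul1r.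
have ones_neq0 : ones n.+1 != 0 :> 'rV[R]_n.+1.
  by apply/eqP => /rowP /(_ ord0) /eqP; rewrite !mxE oner_eq0.
have rank_ker : \rank (kermx M^T) = 1%N.
  by rewrite mxrank_ker mxrank_tr (eqP free); lia.
have := mxrank_leqif_sup onesM; rewrite rank_ker rank_rV ones_neq0 => -[_ ker_ones].
have /submxP [C ->] : (v <= ones n.+1)%MS by rewrite (submx_trans vM) // -ker_ones.
by exists (C 0 0); rewrite [C]mx11_scalar mul_scalar_mx mxE.
Qed.

Lemma slope_squeeze (R : realType) (N a b : R) (f A : R -> R) :
  0 <= N ->
  (forall t, 0 < t <= 1 -> t * a <= f t <= t * A t) ->
  (forall e, 0 < e -> exists2 dl, 0 < dl &
     forall t, 0 < t <= 1 -> t * N < dl -> `|A t - a| <= e) ->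
  (forall e, 0 < e -> exists2 dl, 0 < dl &
     forall t, 0 < t <= 1 -> t * N < dl -> `|f t - t * b| <= e * (t * N)) ->
  a = b.
Proof.
move=> N0 squeeze A_cont f_slope.
have close e : 0 < e -> a <= b + e /\ b <= a + e.
  move=> e0; have e20 : 0 < e / 2 by rewrite divr_gt0.
  have eN0 : 0 < e / 2 / (N + 1) by rewrite divr_gt0 // ltr_wpDl.
  have [dlA dlA0 hA] := A_cont _ e20.
  have [dlf dlf0 hf] := f_slope _ eN0.
  pose dl := Order.min dlA dlf.
  have dl0 : 0 < dl by rewrite lt_min dlA0 dlf0.
  pose t := dl / (N + dl + 1).
  have t0 : 0 < t by rewrite divr_gt0 // ltr_wpDl // addr_ge0 // ltW.
  have t1 : t <= 1 by rewrite ler_pdivrMr ?mul1r; lra.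
  have tN : t * N < dl by rewrite mulrAC ltr_pdivrMr; nra.
  have tt1 : 0 < t <= 1 by rewrite t0 t1.
  have /andP [tNA tNf] : (t * N < dlA) && (t * N < dlf) by rewrite -lt_min.
  have /andP [fa fA] := squeeze _ tt1.
  have /ler_normlP [_ Aa] := hA _ tt1 tNA.
  have /ler_normlP [fb1 fb2] := hf _ tt1 tNf.
  have eN : e / 2 / (N + 1) * (t * N) <= t * (e / 2).
    have : e / 2 / (N + 1) * (N + 1) = e / 2 by rewrite divfK // gt_eqF // ltr_wpDl.
    nra.
  by split; rewrite -(ler_pM2l t0); nra.
apply/eqP; rewrite eq_le; apply/andP; split; by apply/ler_addgt0Pr => e /close [].
Qed.

Section ProperScoringRule.
Variables (R : realType) (n : nat) (D : set 'rV[R]_n).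
Variables (s : 'rV[R]_n -> 'I_n -> R) (g : 'rV[R]_n -> 'rV[R]_n).

Definition score_row (p : 'rV[R]_n) : 'rV[R]_n := \row_k s p k.

Lemma exp_scoreE p x : exp_score s p x = dotv (score_row x) p.
Proof. by apply: eq_bigr => k _; rewrite mxE mulrC. Qed.

Hypothesis proper : proper_scoring_rule D s.

Lemma proper_subgradient p r : D p -> D r ->
  Gfun s p + dotv (score_row p) (r - p) <= Gfun s r.
Proof.
move=> Dp Dr; rewrite /Gfun dotvBr -!exp_scoreE addrC subrK.
exact: (proper Dr Dp).1.
Qed.

Hypothesis continuous : continuous_scoring_rule D s.

Lemma score_row_continuous p u : D p -> forall e, 0 < e -> exists2 dl, 0 < dl &
  forall q, D q -> nrm1 (q - p) < dl ->
    `|dotv (score_row q) u - dotv (score_row p) u| <= e.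
Proof.
move=> Dp e e0; set eps := e / (nrm1 u + 1).
have u1 : 0 < nrm1 u + 1 by rewrite ltr_wpDl ?nrm1_ge0.
have eps0 : 0 < eps by rewrite divr_gt0.
have /choice [dl dlP] : forall k, exists dl, 0 < dl /\ forall q, D q ->
    nrm1 (q - p) < dl -> `|s q k - s p k| < eps.
  by move=> k; have [dl ? ?] := continuous k Dp eps0; exists dl.
exists (\big[Order.min/1]_k dl k).
  by apply: lt_bigmin => // k _; case: (dlP k).
move=> q Dq qp; apply: le_trans (dotv_lipschitz _ _) _ => [k|].
  rewrite !mxE ltW //; apply: (proj2 (dlP k)) => //.
  by apply: lt_le_trans qp _; exact: bigmin_le.
by rewrite -[leRHS](divfK (lt0r_neq0 u1)) ler_pM2l // lerDl.
Qed.

Hypotheses (domain : forecast_domain D) (gradient : is_gradient_on D (Gfun s) g).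

Lemma proper_score_gradient p r : D p -> D r ->
  dotv (score_row p) (r - p) = dotv (g p) (r - p).
Proof.
move=> Dp Dr; have [_ convexD _] := domain.
pose q t := t *: r + (1 - t) *: p.
have Dq t : 0 < t <= 1 -> D (q t).
  by case/andP=> t0 t1; apply: convexD => //; rewrite ltW.
have nrm_qp t : 0 < t -> nrm1 (q t - p) = t * nrm1 (r - p).
  by move=> t0; rewrite segmentBl nrm1Z ?ltW.
apply: (@slope_squeeze _ (nrm1 (r - p)) _ _ (fun t => Gfun s (q t) - Gfun s p)
  (fun t => dotv (score_row (q t)) (r - p))); first exact: nrm1_ge0.
- move=> t t01; have Dqt := Dq t t01.
  have := proper_subgradient Dp Dqt; rewrite segmentBl dotvZr => lower.
  have := proper_subgradient Dqt Dp.
  rewrite -opprB segmentBl -scaleNr dotvZr.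
  by move=> upper; apply/andP; split; lra.
- move=> e e0; have [dl dl0 near_p] := score_row_continuous (r - p) Dp e0.
  exists dl => // t t01 tN; apply: near_p; first exact: Dq.
  by rewrite nrm_qp //; case/andP: t01.
- move=> e e0; have [dl dl0 near_p] := gradient Dp e0.
  exists dl => // t t01 tN; have t0 : 0 < t by case/andP: t01.
  rewrite -(nrm_qp _ t0) -dotvZr -segmentBl.
  by apply: near_p; rewrite ?nrm_qp //; exact: Dq.
Qed.

Lemma proper_score_exposure p : D p -> exists c : R, score_row p = g p + c *: ones n.
Proof.
move=> Dp; have [c gap] : exists c : R, score_row p - g p = c *: ones n.
  apply: (forecast_domain_normal_ones domain Dp) => r Dr.
  by rewrite dotvBl (proper_score_gradient Dp Dr) subrr.
by exists c; rewrite -gap addrC subrK.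
Qed.

End ProperScoringRule.

Section QuasiArithmeticPool.
Variables (R : realType) (n m : nat) (D : set 'rV[R]_n) (g : 'rV[R]_n -> 'rV[R]_n).
Hypothesis exposure : convex_exposure D g.

Lemma convex_exposure_combination k (x : 'I_k -> R) (q : 'I_k -> 'rV[R]_n) :
  (forall i, D (q i)) -> (forall i, 0 <= x i) -> \sum_i x i = 1 ->
  exists2 r, D r & exists c : R, g r = \sum_i x i *: g (q i) + c *: ones n.
Proof.
elim: k x q => [|k IH] x q Dq x0; first by rewrite big_ord0 => /eqP; rewrite eq_sym oner_eq0.
rewrite big_ord_recl => x1; set t := 1 - x ord0.
have tail0 : 0 <= \sum_(i < k) x (lift ord0 i) by exact: sumr_ge0.
have [t0|t_neq0] := eqVneq t 0.
  have tail_eq0 : \sum_(i < k) x (lift ord0 i) = 0 by move: t0; rewrite /t; lra.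
  have xS0 i : x (lift ord0 i) = 0 by exact: (psumr_eq0P (fun i _ => x0 _) tail_eq0).
  exists (q ord0); first exact: Dq.
  exists 0; rewrite big_ord_recl big1 => [|i _]; last by rewrite xS0 scale0r.
  have -> : x ord0 = 1 by move: t0; rewrite /t; lra.
  by rewrite scale1r scale0r !addr0.
have tail_t : \sum_(i < k) x (lift ord0 i) = t by rewrite /t; lra.
have t_ge0 : 0 <= t by rewrite -tail_t.
have tail1 : \sum_(i < k) x (lift ord0 i) / t = 1 by rewrite -mulr_suml tail_t divff.
have [r' Dr' [c' gr']] := IH (fun i => x (lift ord0 i) / t) (fun i => q (lift ord0 i))
  (fun i => Dq _) (fun i => divr_ge0 (x0 _) t_ge0) tail1.
have x01 : 0 <= x ord0 <= 1 by rewrite x0 /=; lra.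
have [r [Dr [c'' gr]]] := exposure (Dq ord0) Dr' x01.
exists r => //; exists (t * c' + c'').
rewrite gr gr' big_ord_recl -/t scalerDr scaler_sumr scalerA scalerDl !addrA.
congr (_ + _ + _ + _); apply: eq_bigr => i _.
by rewrite scalerA mulrC divfK.
Qed.

Variable ps : 'I_m -> 'rV[R]_n.
Hypothesis Dps : forall i, D (ps i).

Lemma qa_poolP x : std_simplex m x -> is_qa_pool D g ps x (qa_pool D g ps x).
Proof.
move=> [x0 x1]; apply: xgetPex.
have [r Dr [c gr]] := convex_exposure_combination Dps x0 x1.
by exists r; split => //; exists c.
Qed.

End QuasiArithmeticPool.

Definition centered_coord (R : realType) n (q : 'rV[R]_n) (j : 'I_n) (v : 'rV[R]_n) : R :=
  v 0 j - dotv v q.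

Lemma centered_coord_combination (R : realType) n m (q : 'rV[R]_n) j
    (x : 'I_m -> R) (v : 'I_m -> 'rV[R]_n) (c : R) :
  \sum_k q 0 k = 1 ->
  centered_coord q j (\sum_i x i *: v i + c *: ones n) =
  \sum_i x i * centered_coord q j (v i).
Proof.
move=> q1; rewrite /centered_coord dotv_combination // !mxE summxE.
rewrite mulr1 opprD addrACA subrr addr0 -sumrB.
by apply: eq_bigr => i _; rewrite !mxE mulrBr.
Qed.

Section PoolScore.
Variables (R : realType) (n m : nat) (D : set 'rV[R]_n).
Variables (s : 'rV[R]_n -> 'I_n -> R) (g : 'rV[R]_n -> 'rV[R]_n) (ps : 'I_m -> 'rV[R]_n).
Hypotheses (domain : forecast_domain D) (proper : proper_scoring_rule D s).
Hypotheses (continuous : continuous_scoring_rule D s).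
Hypotheses (gradient : is_gradient_on D (Gfun s) g) (exposure : convex_exposure D g).
Hypothesis Dps : forall i, D (ps i).

Lemma qa_pool_score x (q : 'rV[R]_n) j : std_simplex m x -> \sum_k q 0 k = 1 ->
  s (qa_pool D g ps x) j =
  \sum_i x 0 i * centered_coord q j (g (ps i)) + exp_score s q (qa_pool D g ps x).
Proof.
move=> x_simplex q1; set p := qa_pool D g ps x.
have [Dp [c' gp]] := qa_poolP exposure Dps x_simplex.
have [c sp] := proper_score_exposure proper continuous domain gradient Dp.
have -> : s p j = centered_coord q j (score_row s p) + exp_score s q p.
  by rewrite /centered_coord exp_scoreE mxE subrK.
by rewrite sp gp -(addrA (\sum_i _)) -scalerDl centered_coord_combination.
Qed.

Lemma qa_pool_score_le x y j : std_simplex m x -> std_simplex m y ->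
  s (qa_pool D g ps x) j <=
  \sum_i x 0 i * centered_coord (qa_pool D g ps y) j (g (ps i)) + Gfun s (qa_pool D g ps y).
Proof.
move=> x_simplex y_simplex; set q := qa_pool D g ps y.
have [Dq _] := qa_poolP exposure Dps y_simplex.
have [Dp _] := qa_poolP exposure Dps x_simplex.
have [simplexD _ _] := domain; have [_ q1] := simplexD _ Dq.
by rewrite (qa_pool_score j x_simplex q1) lerD2l; exact: (proper Dq Dp).1.
Qed.

End PoolScore.

Lemma std_simplex_coord_le1 (R : realType) m (x : 'rV[R]_m) i :
  std_simplex m x -> 0 <= x 0 i <= 1.
Proof.
move=> [x0 x1]; rewrite x0 -x1 (bigD1 i) //= lerDl.
exact: sumr_ge0.
Qed.

Section Expectation.
Variables (d : measure_display) (Omega : measurableType d) (R : realType).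

Lemma le_integral_integrable_ub (mu : {measure set Omega -> \bar R}) (D : set Omega)
    (f h : Omega -> \bar R) :
  measurable D -> measurable_fun D f -> mu.-integrable D h ->
  {in D, forall x, (f x <= h x)%E} ->
  (\int[mu]_(x in D) f x <= \int[mu]_(x in D) h x)%E.
Proof.
move=> mD mf /integrableP [mh _] fh; rewrite integralE [leRHS]integralE leeB //.
  apply: ge0_le_integral => //; [exact: measurable_funepos.. |].
  by move=> x /mem_set; exact: funepos_le.
apply: ge0_le_integral => //; [exact: measurable_funeneg.. |].
by move=> x /mem_set; exact: funeneg_le.
Qed.

Variables (P : probability Omega R) (m : nat) (w : Omega -> 'rV[R]_m).
Hypotheses (w_simplex : forall om, std_simplex m (w om)).
Hypotheses (w_meas : forall i, measurable_fun setT (fun om => w om 0 i)).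

Lemma coord_integrable i : P.-integrable setT (EFin \o (fun om => w om 0 i)).
Proof.
apply: (@le_integrable _ _ _ P setT measurableT _ (EFin \o cst 1%R)).
- exact/measurable_EFinP.
- move=> om _ /=; have /andP [w0 w1] := std_simplex_coord_le1 i (w_simplex om).
  by rewrite lee_fin normr1 ger0_norm.
- exact: finite_measure_integrable_cst.
Qed.

Lemma Rintegral_coordE i :
  (Rintegral P setT (fun om => w om 0 i))%:E = (\int[P]_om (w om 0 i)%:E)%E.
Proof. by rewrite fineK //; exact: integrable_fin_num (coord_integrable i). Qed.

Let w_mean := \row_i Rintegral P setT (fun om => w om 0 i).

Lemma mean_std_simplex : std_simplex m w_mean.
Proof.
split=> [i|]; rewrite ?mxE.
  by apply: Rintegral_ge0 => om _; have /andP [] := std_simplex_coord_le1 i (w_simplex om).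
apply: EFin_inj; rewrite -sumEFin.
under eq_bigr do rewrite mxE Rintegral_coordE.
rewrite -integral_sum //; last exact: coord_integrable.
under eq_integral do rewrite sumEFin (proj2 (w_simplex _)).
by rewrite integral_cst //= probability_setT mul1e.
Qed.

Let affine_integrandE (b : 'I_m -> R) (c : R) :
  (fun om => (\sum_i w om 0 i * b i + c)%:E) =
  (fun om => \sum_i (b i)%:E * (w om 0%R i)%:E + cst c%:E om)%E.
Proof.
by apply/funext => om; rewrite EFinD -sumEFin; under eq_bigr do rewrite EFinM muleC.
Qed.

Let integrable_linear (b : 'I_m -> R) :
  P.-integrable setT (fun om => \sum_i (b i)%:E * (w om 0%R i)%:E)%E.
Proof. by apply: integrable_sum => // i _; exact: integrableZl (coord_integrable i). Qed.

Lemma integrable_affine (b : 'I_m -> R) (c : R) :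
  P.-integrable setT (fun om => (\sum_i w om 0 i * b i + c)%:E).
Proof.
rewrite affine_integrandE; apply: integrableD => //.
exact: finite_measure_integrable_cst.
Qed.

Lemma integral_affine (b : 'I_m -> R) (c : R) :
  (\int[P]_om (\sum_i w om 0 i * b i + c)%:E)%E = (\sum_i w_mean 0 i * b i + c)%:E.
Proof.
rewrite affine_integrandE integralD //; last exact: finite_measure_integrable_cst.
rewrite integral_sum //; last by move=> i; exact: integrableZl (coord_integrable i).
rewrite integral_cst // [X in (_ * X)%E]probability_setT mule1 EFinD -sumEFin.
congr (_ + _)%E; apply: eq_bigr => i _.
by rewrite integralZl // ?coord_integrable // -Rintegral_coordE mxE muleC.
Qed.

End Expectation.

Theorem corollary5p4 (R : realType) (n m : nat) (D : set 'rV[R]_n)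
  (s : 'rV[R]_n -> 'I_n -> R) (g : 'rV[R]_n -> 'rV[R]_n)
  (ps : 'I_m -> 'rV[R]_n)
  (d : measure_display) (Omega : measurableType d) (P : probability Omega R)
  (w : Omega -> 'rV[R]_m) :
  forecast_domain D ->
  proper_scoring_rule D s ->
  continuous_scoring_rule D s ->
  strictly_convex_on D (Gfun s) ->
  is_gradient_on D (Gfun s) g ->
  convex_exposure D g ->
  (forall i, D (ps i)) ->
  (forall om, std_simplex m (w om)) ->
  (forall i, measurable_fun setT (fun om => w om 0 i)) ->
  let w_hat : 'rV[R]_m := \row_(i < m) Rintegral P setT (fun om => w om 0 i) in
  forall j : 'I_n,
    measurable_fun setT (fun om => s (qa_pool D g ps (w om)) j) ->
    (\int[P]_om (s (qa_pool D g ps (w om)) j)%:E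
       <= (s (qa_pool D g ps w_hat) j)%:E)%E.
Proof.
move=> domain proper continuous _ gradient exposure Dps w_simplex w_meas w_hat j score_meas.
have w_hat_simplex : std_simplex m w_hat := mean_std_simplex P w_simplex w_meas.
set q := qa_pool D g ps w_hat; set b := fun i => centered_coord q j (g (ps i)).
have [Dq _] := qa_poolP exposure Dps w_hat_simplex.
have [_ q1] : std_simplex n q by case: domain => simplexD _ _; exact: simplexD.
have affine_mean := integral_affine P w_simplex w_meas b (Gfun s q).
rewrite -/w_hat in affine_mean.
rewrite (qa_pool_score domain proper continuous gradient exposure Dps j w_hat_simplex q1).
rewrite -[exp_score s q q]/(Gfun s q) -affine_mean.
apply: le_integral_integrable_ub => //.
- exact/measurable_EFinP.
- exact: integrable_affine.
- by move=> om _; rewrite lee_fin qa_pool_score_le.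
Qed.
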